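(* Let $m\ge 2$ and $G=CK(2m-1)$. Every blocker for the simple Hamiltonian paths of $G$ contains at least two boundary edges.
   Context: $CK(2m-1)$ is the complete convex geometric graph on $2m-1$ points in convex position (vertices of a convex polygon $P$), labelled cyclically $0,\dots,2m-2$, with all segments between vertices as edges; boundary edges are the edges $[i,i+1]$ (mod $2m-1$) of $P$. A simple Hamiltonian path (SHP) is a path through all vertices whose edges pairwise do not cross. A blocker for SHPs is a set of edges of smallest possible size having an edge in common with every SHP. *)

From mathcomp Require Import all_boot.
Set Implicit Arguments. Unset Strict Implicit. Unset Printing Implicit Defensive.

(* CK(n): vertices 'I_n, points in convex position labelled cyclically 0..n-1.
   An edge (segment) is a 2-element vertex set. *)
Section CK.
Variable n : nat.

Definition is_edge (e : {set 'I_n}) : bool := #|e| == 2.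

(* Two segments of points in convex position cross iff their four endpoints
   are distinct and interleave in the cyclic order: with a < b the endpoints
   of e, exactly one endpoint of f lies strictly between a and b. *)
Definition cross (e f : {set 'I_n}) : bool :=
  [exists a : 'I_n, exists b : 'I_n, exists c : 'I_n, exists d : 'I_n,
    [&& e == [set a; b], f == [set c; d], (a < c < b)%N & (d < a)%N || (b < d)%N]].

Definition path_edges (p : seq 'I_n) : seq {set 'I_n} :=
  [seq [set x.1; x.2] | x <- zip p (behead p)].

Definition simple_ham_path (p : seq 'I_n) : bool :=
  [&& size p == n, uniq p &
      all (fun e => all (fun f => ~~ cross e f) (path_edges p)) (path_edges p)].

Definition blocks (B : {set {set 'I_n}}) : Prop :=
  (forall e, e \in B -> is_edge e) /\
  (forall p, simple_ham_path p -> has (fun e => e \in B) (path_edges p)).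

Definition blocker (B : {set {set 'I_n}}) : Prop :=
  blocks B /\ (forall B', blocks B' -> #|B| <= #|B'|).

Definition boundary_edge (e : {set 'I_n}) : bool :=
  [exists i : 'I_n, exists j : 'I_n, (e == [set i; j]) && (val j == i.+1 %% n)].

End CK.

(* Boundary edges of a convex polygon cross no segment, so for every boundary
   edge [x, x+1] the walk x+1, x+2, ..., x around the polygon is a simple
   Hamiltonian path whose edges are exactly the boundary edges other than
   [x, x+1].  Any set of edges meeting every such path therefore contains a
   boundary edge [y, y+1] with y <> x, and then one [z, z+1] with z <> y. *)

From mathcomp Require Import all_boot.
From mathcomp Require Import zify.

Section CyclicSuccessor.
Variable n : nat.
Implicit Types x y : 'I_n.

Definition succ_edge x : {set 'I_n} := [set x; ordS x].

Lemma val_ordS x : val (ordS x) = if x.+1 == n then 0 else x.+1.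
Proof.
case: eqP => [xn | ne_xn] /=; first by rewrite xn modnn.
by rewrite modn_small // ltn_neqAle; apply/andP; split; [apply/eqP | exact: ltn_ord].
Qed.

Lemma val_iter_ordS k x : val (iter k (@ordS n) x) = (x + k) %% n.
Proof.
elim: k => [|k IH] /=; first by rewrite addn0 modn_small.
by rewrite IH addnS -addn1 -[(x + k).+1]addn1 modnDml.
Qed.

Lemma iter_ordS_id k x : k < n -> (iter k (@ordS n) x == x) = (k == 0).
Proof.
move=> lt_kn; rewrite -val_eqE val_iter_ordS /= -{2}(modn_small (ltn_ord x)).
by rewrite -{2}[nat_of_ord x]addn0 eqn_modDl mod0n modn_small.
Qed.

Lemma ordS_ordS_neq x : 2 < n -> ordS (ordS x) != x.
Proof. by move=> n_gt2; rewrite (iter_ordS_id 2). Qed.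

Lemma boundary_edge_succ x : boundary_edge (succ_edge x).
Proof.
by apply/existsP; exists x; apply/existsP; exists (ordS x); rewrite /succ_edge !eqxx.
Qed.

Lemma cross_succ_edge x f : ~~ cross (succ_edge x) f.
Proof.
apply/existsP => -[a /existsP [b /existsP [c /existsP [d]]]].
case/and4P => /eqP eab _ /andP [lt_ac lt_cb] out_d.
have : a \in succ_edge x by rewrite eab set21.
have : b \in succ_edge x by rewrite eab set22.
have := ltn_ord d; have := ltn_ord x.
rewrite !inE -!val_eqE val_ordS /=; case: (x.+1 =P n); lia.
Qed.

Lemma succ_edge_inj : 2 < n -> injective succ_edge.
Proof.
move=> n_gt2 x y exy; apply/eqP; apply: contraT => nxy.
have : x \in succ_edge y by rewrite -exy set21.
rewrite !inE (negbTE nxy) /= => /eqP xE.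
have : y \in succ_edge x by rewrite exy set21.
rewrite !inE eq_sym (negbTE nxy) /= => /eqP yE.
by have := ordS_ordS_neq y n_gt2; rewrite -xE -yE eqxx.
Qed.

Lemma uniq_traject_ordS k x : k <= n -> uniq (traject (@ordS n) x k).
Proof.
case: k => // k lt_kn; rewrite looping_uniq; apply/trajectP => -[i lt_ik].
rewrite -(subnK (ltnW lt_ik)) iterD => /eqP.
by rewrite iter_ordS_id; lia.
Qed.

Lemma path_edges_traject (f : 'I_n -> 'I_n) x k :
  path_edges (traject f x k) = [seq [set y; f y] | y <- traject f x k.-1].
Proof. by elim: k x => [|[|k] IH] x //=; rewrite -IH. Qed.

Definition boundary_path x : seq 'I_n := traject (@ordS n) (ordS x) n.

Lemma boundary_path_edges x e :
  e \in path_edges (boundary_path x) -> exists2 y, y != x & e = succ_edge y.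
Proof.
rewrite path_edges_traject => /mapP [y /trajectP [i lt_i ->] ->].
exists (iter i.+1 (@ordS n) x); last by rewrite -iterSr.
by rewrite iter_ordS_id; lia.
Qed.

Lemma boundary_path_simple x : simple_ham_path (boundary_path x).
Proof.
apply/and3P; split; first by rewrite size_traject.
  exact: uniq_traject_ordS.
apply/allP => e /boundary_path_edges [y _ ->].
by apply/allP => f _; apply: cross_succ_edge.
Qed.

Lemma blocks_succ_edge_off (B : {set {set 'I_n}}) x :
  blocks B -> exists2 y, y != x & succ_edge y \in B.
Proof.
case=> _ /(_ _ (boundary_path_simple x)) /hasP [e].
by case/boundary_path_edges => y nyx -> yB; exists y.
Qed.

Lemma blocks_two_boundary_edges (B : {set {set 'I_n}}) :
  2 < n -> blocks B -> 2 <= #|[set e in B | boundary_edge e]|.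
Proof.
move=> n_gt2 blB.
have [y _ yB] := blocks_succ_edge_off B (Ordinal (ltnW (ltnW n_gt2))) blB.
have [z nzy zB] := blocks_succ_edge_off B y blB.
have <- : #|[set succ_edge z; succ_edge y]| = 2.
  by rewrite cards2 (inj_eq (succ_edge_inj n_gt2)) nzy.
apply/subset_leq_card/subsetP => e; rewrite !inE.
by case/orP => /eqP ->; rewrite boundary_edge_succ ?zB ?yB.
Qed.

End CyclicSuccessor.

Theorem mainTheorem4 (m : nat) (hm : 2 <= m) (B : {set {set 'I_(2 * m - 1)}}) :
  blocker B -> 2 <= #|[set e in B | boundary_edge e]|.
Proof.
case=> blB _; apply: blocks_two_boundary_edges blB; lia.
Qed.
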